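(* Let $T=(V,E)$ be a finite undirected tree, let $\mathcal{O}$ be a nonempty proper subset of $V$, and consider the infection model described in the context. Let $R\subset[\mathcal{O}]$ be a star arrangement of classes and $\partial R:=\bigcup_{r\in R}\partial r$. If $s\in\bigcup_{r\in R}r$, then the statistic $(\tau_o)_{o\in\partial R}$ is sufficient for $s$; that is, as the source $s$ ranges over $\bigcup_{r\in R}r$, the conditional distribution of the full observer vector $(\tau_o)_{o\in\mathcal{O}}$ given $(\tau_o)_{o\in\partial R}$ does not depend on $s$.
   Context: Infection model: an infection starts at time $0$ at a single unknown node $s\in V$ (the source). For each edge $e\in E$ there is a nonnegative random delay $\tau_e$ with a continuous distribution of known law, and the $\tau_e$, $e\in E$, are independent. For $u,v\in V$, $[u,v]$ denotes the set of edges (or vertices) of the unique path in $T$ between $u$ and $v$. The infection time of $v$ is $\tau_v:=\sum_{e\in[s,v]}\tau_e$. The observers are the nodes of $\mathcal{O}$. Equivalence classes: for $u,v\in V\setminus\mathcal{O}$, $u\equiv v$ iff $[u,v]\cap\mathcal{O}=\emptyset$ (vertex sets); $[\mathcal{O}]$ is the set of classes. For $r\in[\mathcal{O}]$, $\partial r$ is the set of observers adjacent to some node of $r$. A set $R\subset[\mathcal{O}]$ is a star arrangement if $\bigcap_{r\in R}\partial r\neq\emptyset$. *)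

From HB Require Import structures.
From mathcomp Require Import all_boot all_order all_algebra.
From mathcomp Require Import all_classical all_reals.
From mathcomp Require Import measure lebesgue_measure lebesgue_integral probability kernel.

Set Implicit Arguments.
Unset Strict Implicit.
Unset Printing Implicit Defensive.

Import Order.TTheory GRing.Theory Num.Theory.
Local Open Scope ring_scope.

Section Tree.
Variables (V : finType) (adj : rel V).

Definition spath (u v : V) (p : seq V) : bool :=
  [&& path adj u p, uniq (u :: p) & last u p == v].

Definition is_tree : Prop :=
  symmetric adj /\ irreflexive adj /\
  forall u v : V, exists p, spath u v p /\ forall q, spath u v q -> q = p.

Definition is_edge (e : {set V}) : bool :=
  [exists x, exists y, adj x y && (e == [set x; y])].
Definition edge := {e : {set V} | is_edge e}.

(* The (vertex sequence, minus the start) of the unique path from u to v. *)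
Definition tpath (u v : V) : seq V := xget [::] [set p | spath u v p].

Definition pverts (u v : V) : {set V} := [set x in u :: tpath u v].

Definition pedges (u v : V) : {set edge} :=
  [set e : edge | val e \in [seq [set xy.1; xy.2] | xy <- zip (u :: tpath u v) (tpath u v)]].

Variable O : {set V}.

Definition oequiv (u v : V) : bool :=
  [&& u \notin O, v \notin O & [disjoint pverts u v & O]].

Definition is_class (r : {set V}) : Prop :=
  exists2 u, u \notin O & r = [set v | oequiv u v].

Definition bdry (r : {set V}) : {set V} :=
  [set o in O | [exists x in r, adj o x]].

Definition star_arrangement (Rs : {set {set V}}) : Prop :=
  \bigcap_(r in Rs) bdry r != finset.set0.

Definition bdryR (Rs : {set {set V}}) : {set V} := \bigcup_(r in Rs) bdry r.
Definition unionR (Rs : {set {set V}}) : {set V} := \bigcup_(r in Rs) r.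
End Tree.

Local Open Scope classical_set_scope.

Definition rvec (R : realType) (I : Type) := I -> R.
HB.instance Definition _ (R : realType) (I : Type) :=
  Choice.on (rvec R I).
HB.instance Definition _ (R : realType) (I : Type) :=
  isPointed.Build (rvec R I) (fun _ => 0).

Definition coord_gen (R : realType) (I : Type) : set (set (rvec R I)) :=
  [set A | exists i : I, exists2 B : set R, measurable B & A = (fun f : rvec R I => f i) @^-1` B].

Definition vecspace (R : realType) (I : Type) := g_sigma_algebraType (@coord_gen R I).

Section Infection.
Context {R : realType} {d : measure_display} {Omega : measurableType d}
        (P : probability Omega R).
Context {V : finType} {adj : rel V}.

Definition indep_delays (tau : edge adj -> Omega -> R) : Prop :=
  forall B : edge adj -> set R, (forall e, measurable (B e)) ->
    P (\bigcap_(e in [set: edge adj]) (tau e @^-1` B e)) =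
    (\prod_(e : edge adj) P (tau e @^-1` B e))%E.

Definition inf_time (tau : edge adj -> Omega -> R) (s v : V) (w : Omega) : R :=
  \sum_(e in pedges adj s v) tau e w.

Definition obs_vec (tau : edge adj -> Omega -> R) (s : V) (S : {set V})
  (w : Omega) : {o : V | o \in S} -> R :=
  fun o => inf_time tau s (val o) w.

(* Sufficiency of a statistic Y_s for the parameter s ranging over Theta,
   for the data X_s: there is a common (s-independent) version K of the
   conditional distribution of X_s given Y_s, i.e. a probability kernel K
   with  P(X_s in A, Y_s in B) = int_{Y_s in B} K(Y_s, A) dP  for every s in
   Theta and all measurable A, B. *)
Definition sufficient (Th : Type) (Theta : set Th) (I J : Type)
  (X : Th -> Omega -> (I -> R)) (Y : Th -> Omega -> (J -> R)) : Prop :=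
  exists K : R.-pker (vecspace R J) ~> (vecspace R I),
    forall s, Theta s ->
    forall (A : set (vecspace R I)) (B : set (vecspace R J)),
      measurable A -> measurable B ->
      P (X s @^-1` A `&` Y s @^-1` B) =
      (\int[P]_(w in Y s @^-1` B) K (Y s w : vecspace R J) A)%E.
End Infection.
Arguments obs_vec {R d Omega V adj} tau s S w _.

(* Let H be the union of the classes of R together with their boundary. Since
   all classes of R share a boundary observer, H is a subtree. For an observer
   o, let p(o) be the last vertex of H on a path from H to o: it is a boundary
   observer, and the path from any source s in H to o passes through p(o).
   Hence tau_o = tau_p(o) + (sum of the delays on [p(o), o]), where the
   statistic (tau_o')_{o' in ∂R} only involves delays of edges inside H and the
   second summand only delays of edges outside H. By independence of the
   delays, the conditional law of (tau_o)_o given the statistic y is the law of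
   (y_p(o) + sum of the delays on [p(o), o])_o, whatever s in H is. *)

From HB Require Import structures.
From mathcomp Require Import all_boot all_order all_algebra.
From mathcomp Require Import all_classical all_reals.
From mathcomp Require Import measure lebesgue_measure lebesgue_integral probability kernel.
From mathcomp Require Import measurable_realfun.

Set Implicit Arguments.
Unset Strict Implicit.
Unset Printing Implicit Defensive.

Import Order.TTheory.

Section TreePaths.
Variables (V : finType) (adj : rel V).
Hypothesis tree : is_tree adj.

Lemma tree_sym : symmetric adj.
Proof. by case: tree. Qed.

Lemma tpathP u v : spath adj u v (tpath adj u v).
Proof.
have [_ [_ ex]] := tree; have [p [sp _]] := ex u v.
exact: (xgetPex [::] (P := [set p | spath adj u v p]) (ex_intro _ p sp)).
Qed.

Lemma tpath_unique u v q : spath adj u v q -> q = tpath adj u v.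
Proof.
have [_ [_ ex]] := tree; have [p [sp uq]] := ex u v.
by move=> h; rewrite (uq q h) (uq _ (tpathP u v)).
Qed.

Lemma tpathxx u : tpath adj u u = [::].
Proof. by rewrite -(@tpath_unique u u [::]) // /spath /= eqxx. Qed.

Lemma in_pverts u v x : (x \in pverts adj u v) = (x \in u :: tpath adj u v).
Proof. by rewrite /pverts inE. Qed.

(* The tree path is obtained from any walk by removing its loops. *)
Lemma pverts_walk u w : path adj u w -> pverts adj u (last u w) \subset [set x in u :: w].
Proof.
move=> hw; case: (shortenP hw) => p' pp' up' sub; apply/fintype.subsetP => x.
have sp : spath adj u (last u p') p' by rewrite /spath pp' up' eqxx.
rewrite in_pverts -(tpath_unique sp) !inE => /orP[->//|/sub ->]; by rewrite orbT.
Qed.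

Lemma pverts_triangle a b c :
  pverts adj a c \subset pverts adj a b :|: pverts adj b c.
Proof.
have [pab _ /eqP lab] := and3P (tpathP a b).
have [pbc _ /eqP lbc] := and3P (tpathP b c).
have hw : path adj a (tpath adj a b ++ tpath adj b c) by rewrite cat_path pab lab.
have := pverts_walk hw; rewrite last_cat lab lbc => /fintype.subset_trans; apply.
apply/fintype.subsetP => x; rewrite inE -cat_cons mem_cat finset.in_setU !in_pverts.
case/orP=> h; first by rewrite h.
by rewrite !inE h !orbT.
Qed.

Lemma pverts_sym u v : pverts adj u v = pverts adj v u.
Proof.
wlog suff: u v / pverts adj v u \subset pverts adj u v.
  by move=> h; apply/eqP; rewrite finset.eqEsubset !h.
have [p _ /eqP l] := and3P (tpathP u v); set t := tpath adj u v in p l *.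
have hw : path adj v (rev (belast u t)).
  rewrite -l rev_path; apply: sub_path p => x y; by rewrite tree_sym.
have hl : last v (rev (belast u t)) = u.
  by case: t {p hw} l => [/= <- //| a t _] /=; rewrite rev_cons last_rcons.
have := pverts_walk hw; rewrite hl => /fintype.subset_trans; apply.
apply/fintype.subsetP => x; rewrite !inE mem_rev.
case/orP=> [/eqP ->|/mem_belast //]; by rewrite -in_cons -{1}l mem_last.
Qed.

Lemma pverts_prefix u v w : w \in pverts adj u v ->
  pverts adj u w \subset pverts adj u v.
Proof.
rewrite in_pverts [pverts adj u v]/pverts => hw; have [pp _ _] := and3P (tpathP u v).
case/splitPl: hw pp => p1 p2 lp1; rewrite cat_path => /andP[pp1 _].
have := pverts_walk pp1; rewrite lp1 => /fintype.subset_trans; apply.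
by apply/fintype.subsetP => x; rewrite !inE mem_cat => /orP[->|->]; rewrite ?orbT.
Qed.

Lemma pverts_adj a b : adj a b -> pverts adj a b \subset [set a; b].
Proof.
move=> ab; have hw : path adj a [:: b] by rewrite /= ab.
have := pverts_walk hw => /fintype.subset_trans; apply.
by apply/fintype.subsetP => x; rewrite !inE.
Qed.

Lemma tpath_cat s p o : uniq (s :: tpath adj s p ++ tpath adj p o) ->
  tpath adj s o = tpath adj s p ++ tpath adj p o.
Proof.
have [p1 _ /eqP l1] := and3P (tpathP s p); have [p2 _ l2] := and3P (tpathP p o).
move=> u12; apply/esym/tpath_unique.
by rewrite /spath cat_path p1 l1 p2 u12 last_cat l1 l2.
Qed.

Definition edge_seq (u : V) (t : seq V) : seq {set V} :=
  [seq [set xy.1; xy.2] | xy <- zip (u :: t) t].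

Lemma in_pedges e u v : (e \in pedges adj u v) = (val e \in edge_seq u (tpath adj u v)).
Proof. by rewrite inE. Qed.

Lemma edge_seq_cat u t1 t2 :
  edge_seq u (t1 ++ t2) = edge_seq u t1 ++ edge_seq (last u t1) t2.
Proof. by elim: t1 u => [|a t1 IH] u //=; rewrite -IH. Qed.

Lemma edge_seq_sub u t x : x \in edge_seq u t -> x \subset [set y in u :: t].
Proof.
elim: t u => [|a t IH] u //=; rewrite inE => /orP[/eqP ->|/IH sub].
  by apply/fintype.subsetP => y; rewrite !inE => /orP[->|->]; rewrite ?orbT.
by apply: fintype.subset_trans sub _; apply/fintype.subsetP => y; rewrite !inE => ->; rewrite orbT.
Qed.

Lemma pedges_sub e u v : e \in pedges adj u v -> val e \subset pverts adj u v.
Proof. by rewrite in_pedges => /edge_seq_sub. Qed.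

Lemma pedges_cat s p o : tpath adj s o = tpath adj s p ++ tpath adj p o ->
  pedges adj s o = pedges adj s p :|: pedges adj p o.
Proof.
have [_ _ /eqP l] := and3P (tpathP s p).
by move=> def; apply/setP => e; rewrite finset.in_setU !in_pedges def edge_seq_cat mem_cat l.
Qed.

Definition tconvex (H : {set V}) : Prop :=
  forall a b, a \in H -> b \in H -> pverts adj a b \subset H.

Definition avoids (H : {set V}) (t : seq V) : bool := all (fun v => v \notin H) t.

Lemma exit_vertex (H : {set V}) x o : x \in H ->
  exists2 p, p \in H & avoids H (tpath adj p o).
Proof.
move=> xH; have [pt ut /eqP lt] := and3P (tpathP x o).
have [p [t1 [t2 [def pH t2H]]]] : exists p t1 t2,
    [/\ x :: tpath adj x o = t1 ++ p :: t2, p \in H & avoids H t2].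
  elim/last_ind: (tpath adj x o) => [|t b [p [t1 [t2 [def pH t2H]]]]].
    by exists x, [::], [::].
  case bH: (b \in H); first by exists b, (x :: t), [::]; rewrite -cats1.
  exists p, t1, (rcons t2 b); split => //; last by rewrite /avoids all_rcons bH.
  by rewrite -cats1 -cat_cons def -catA -cats1.
exists p => //.
have sp : spath adj p o t2.
  apply/and3P; split.
  - by move: pt; rewrite -/(sorted _ (x :: _)) def sorted_cat_cons => /andP[].
  - by move: ut; rewrite def cat_uniq => /and3P[_ _].
  - by rewrite -lt -(last_cons x x) def last_cat.
by rewrite -(tpath_unique sp).
Qed.

Lemma tpath_exit (H : {set V}) s p o : tconvex H -> s \in H -> p \in H ->
  avoids H (tpath adj p o) -> tpath adj s o = tpath adj s p ++ tpath adj p o.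
Proof.
move=> conv sH pH out; apply: tpath_cat.
have [_ u1 _] := and3P (tpathP s p); have [_ u2 _] := and3P (tpathP p o).
rewrite -cat_cons cat_uniq u1; move: u2; rewrite cons_uniq => /andP[_ ->].
rewrite andbT; apply/hasPn => y yt; apply/negP => ys.
have := allP out y yt; rewrite (fintype.subsetP (conv _ _ sH pH)) //.
by rewrite in_pverts.
Qed.

Lemma pedges_convex (H : {set V}) s o e : tconvex H -> s \in H -> o \in H ->
  e \in pedges adj s o -> val e \subset H.
Proof. by move=> conv sH oH /pedges_sub /fintype.subset_trans; apply; apply: conv. Qed.

Lemma pedges_exit (H : {set V}) p o e : avoids H (tpath adj p o) ->
  e \in pedges adj p o -> ~~ (val e \subset H).
Proof.
rewrite in_pedges; move: (tpath adj p o) => t.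
elim: t p => [|a t IH] p //= /andP[aH out].
rewrite inE => /orP[/eqP ->|/(IH _ out)//].
by apply/negP => /fintype.subsetP /(_ a); rewrite !inE eqxx orbT (negbTE aH) => /(_ isT).
Qed.

End TreePaths.

Section ObserverHull.
Variables (V : finType) (adj : rel V) (O : {set V}) (Rs : {set {set V}}).
Hypothesis tree : is_tree adj.
Hypothesis classRs : forall r, r \in Rs -> is_class adj O r.

Definition hullR : {set V} := unionR Rs :|: bdryR adj O Rs.

Lemma bdryR_subset_hullR : bdryR adj O Rs \subset hullR.
Proof. exact: finset.subsetUr. Qed.

Lemma unionR_subset_hullR : unionR Rs \subset hullR.
Proof. exact: finset.subsetUl. Qed.

Lemma class_subset_hullR r : r \in Rs -> r :|: bdry adj O r \subset hullR.
Proof.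
move=> rR; apply/fintype.subsetP => x; rewrite !finset.in_setU.
by case/orP=> xr; apply/orP; [left | right]; apply/bigcupP; exists r.
Qed.

Lemma notin_O_class r v : r \in Rs -> v \in r -> v \notin O.
Proof. by move=> /classRs [u _ ->]; rewrite inE => /and3P[]. Qed.

Lemma class_adj_hullR r p c : r \in Rs -> p \in r -> adj p c -> c \in hullR.
Proof.
move=> rR pr pc; apply: (fintype.subsetP (class_subset_hullR rR)).
have [u uO def_r] := classRs rR; rewrite finset.in_setU.
case cO: (c \in O).
  by apply/orP; right; rewrite inE cO /=; apply/existsP; exists p; rewrite pr (tree_sym tree).
move: pr; rewrite def_r !inE /oequiv uO cO orbF => /and3P[_ pO dis] /=.
apply/pred0P => w /=; apply/negbTE/negP => /andP[/(fintype.subsetP (pverts_triangle tree u p c))].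
rewrite finset.in_setU => /orP[wup|/(fintype.subsetP (pverts_adj tree pc))]; last first.
  by rewrite !inE => /orP[]/eqP->; rewrite ?cO // (negbTE pO).
by rewrite (disjointFr dis wup).
Qed.

Lemma class_star r : r \in Rs -> exists u, forall x, x \in r :|: bdry adj O r ->
  pverts adj u x \subset r :|: bdry adj O r.
Proof.
case/classRs => u uO def_r; exists u.
have in_r v : v \in r -> pverts adj u v \subset r.
  rewrite def_r inE => /and3P[_ vO dis]; apply/fintype.subsetP => w hw.
  rewrite inE /oequiv uO (disjointFr dis hw) /=.
  exact: disjointWl (pverts_prefix tree hw) dis.
move=> x; rewrite finset.in_setU => /orP[/in_r|].
  by move/fintype.subset_trans; apply; exact: finset.subsetUl.
rewrite inE => /andP[xO /existsP[y /andP[yr xy]]].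
apply/fintype.subsetP => w /(fintype.subsetP (pverts_triangle tree u y x)).
rewrite !finset.in_setU => /orP[/(fintype.subsetP (in_r _ yr)) -> //|].
rewrite (pverts_sym tree) => /(fintype.subsetP (pverts_adj tree xy)).
rewrite !inE => /orP[]/eqP->; last by rewrite yr.
by rewrite xO; apply/orP; right; apply/existsP; exists y; rewrite yr xy.
Qed.

(* Two points of the hull are joined through a representative of their class
   and an observer on the boundary of every class of the arrangement. *)
Lemma hullR_convex : star_arrangement adj O Rs -> tconvex adj hullR.
Proof.
case/set0Pn => ostar /bigcapP ostar_bdry.
have anchor x : x \in hullR -> exists u,
    pverts adj u x \subset hullR /\ pverts adj u ostar \subset hullR.
  rewrite finset.in_setU => /orP[] /bigcupP[r rR xr];
    have [u ur] := class_star rR; exists u;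
    have sub := class_subset_hullR rR;
    split; apply: fintype.subset_trans (ur _ _) sub;
    by rewrite finset.in_setU ?xr ?ostar_bdry ?orbT.
move=> a b /anchor[ua [ha1 ha2]] /anchor[ub [hb1 hb2]].
apply/fintype.subsetP => x /(fintype.subsetP (pverts_triangle tree a ua b)).
rewrite finset.in_setU (pverts_sym tree) => /orP[/(fintype.subsetP ha1) //|].
move/(fintype.subsetP (pverts_triangle tree ua ostar b)).
rewrite finset.in_setU => /orP[/(fintype.subsetP ha2) //|].
move/(fintype.subsetP (pverts_triangle tree ostar ub b)).
by rewrite finset.in_setU (pverts_sym tree) => /orP[/(fintype.subsetP hb2)|/(fintype.subsetP hb1)].
Qed.

Lemma exit_bdryR o p : o \in O -> p \in hullR ->
  avoids hullR (tpath adj p o) -> p \in bdryR adj O Rs.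
Proof.
move=> oO pH out; move: (pH); rewrite finset.in_setU => /orP[/bigcupP[r rR pr]|//].
have [pp _ /eqP lp] := and3P (tpathP tree p o).
case: (tpath adj p o) pp lp out => [_ /= po _|c t /= /andP[pc _] _ /andP[cH _]].
  by move: (notin_O_class rR pr); rewrite po oO.
by rewrite (class_adj_hullR rR pr pc) in cH.
Qed.

Definition pivot (o : V) : V :=
  odflt o [pick p | (p \in bdryR adj O Rs) && avoids hullR (tpath adj p o)].

Lemma pivot_avoids o : avoids hullR (tpath adj (pivot o) o).
Proof.
by rewrite /pivot; case: pickP => [p /andP[] //|_]; rewrite /= tpathxx.
Qed.

Lemma pivot_bdryR x o : x \in hullR -> o \in O -> pivot o \in bdryR adj O Rs.
Proof.
move=> xH oO; rewrite /pivot; case: pickP => [p /andP[] //|none].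
have [p pH out] := exit_vertex tree o xH.
by move: (none p); rewrite (exit_bdryR oO pH out) out.
Qed.

Lemma pedges_via_pivot s o : star_arrangement adj O Rs -> s \in hullR -> o \in O ->
  pedges adj s o = pedges adj s (pivot o) :|: pedges adj (pivot o) o.
Proof.
move=> star sH oO; have pH : pivot o \in hullR.
  by apply: (fintype.subsetP bdryR_subset_hullR); exact: pivot_bdryR sH oO.
exact/(pedges_cat tree)/(tpath_exit tree (hullR_convex star) sH pH (pivot_avoids o)).
Qed.

End ObserverHull.

Local Open Scope classical_set_scope.
Local Open Scope ring_scope.

Section Coordinates.
Variable R : realType.

Lemma measurable_coord (I : Type) (i : I) :
  measurable_fun setT (fun z : vecspace R I => z i).
Proof. by move=> _ B mB; rewrite setTI; apply: sub_sigma_algebra; exists i, B. Qed.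

Lemma measurable_vec d (T : measurableType d) (I : Type) (f : T -> vecspace R I) :
  (forall i, measurable_fun setT (fun t => f t i)) -> measurable_fun setT f.
Proof.
move=> mf; apply: (@measurability _ _ _ _ setT f (@coord_gen R I)) => //.
by move=> _ [_ [i [B mB ->]] <-]; exact: mf.
Qed.

Lemma measurable_sum_set d (T : measurableType d) (E : finType) (A : {set E})
    (h : E -> T -> R) :
  (forall e, measurable_fun setT (h e)) ->
  measurable_fun setT (fun t => \sum_(e in A) h e t).
Proof.
move=> mh; under eq_fun do rewrite -big_enum.
exact: measurable_sum.
Qed.

Definition cylinder (I : Type) (B : I -> set R) : set (vecspace R I) :=
  \bigcap_(i in [set: I]) ((fun z : vecspace R I => z i) @^-1` B i).

Definition cylinders (I : Type) : set (set (vecspace R I)) :=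
  [set A | exists2 B, (forall i, measurable (B i)) & A = cylinder B].

Variable E : finType.

Lemma measurable_cylinder (B : E -> set R) :
  (forall i, measurable (B i)) -> measurable (cylinder B).
Proof.
move=> mB; apply: fin_bigcap_measurable; first exact: finite_finset.
by move=> i _; rewrite -[_ @^-1` _]setTI; apply: measurable_coord.
Qed.

Lemma cylinders_generate : @measurable _ (vecspace R E) = <<s @cylinders E >>.
Proof.
apply/seteqP; split.
  apply: smallest_sub; first exact: smallest_sigma_algebra.
  move=> _ [i [B mB ->]]; apply: sub_sigma_algebra.
  exists (fun j => if j == i then B else setT); first by move=> j; case: ifP.
  apply/seteqP; split => z /=; last by move=> /(_ i I); rewrite eqxx.
  by move=> zi j _ /=; case: ifP => // /eqP ->.
apply: smallest_sub; first exact: sigma_algebra_measurable.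
by move=> _ [B mB ->]; exact: measurable_cylinder.
Qed.

Lemma cylinders_setI : setI_closed (@cylinders E).
Proof.
move=> _ _ [B1 mB1 ->] [B2 mB2 ->]; exists (fun i => B1 i `&` B2 i).
  by move=> i; exact: measurableI.
apply/seteqP; split => z /=; first by move=> [h1 h2] i _; split; [exact: h1|exact: h2].
by move=> h; split => i _; have [] := h i I.
Qed.

End Coordinates.

Section IndependentSplit.
Context {R : realType} {d : measure_display} {Omega : measurableType d}
  (P : probability Omega R).
Variables (E : finType) (Z : E -> Omega -> R).
Hypothesis mZ : forall i, measurable_fun setT (Z i).
Hypothesis indepZ : forall B : E -> set R, (forall i, measurable (B i)) ->
  P (\bigcap_(i in [set: E]) (Z i @^-1` B i)) = (\prod_(i : E) P (Z i @^-1` B i))%E.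

Definition vecZ (w : Omega) : vecspace R E := fun i => Z i w.

Lemma measurable_vecZ : measurable_fun setT vecZ.
Proof. exact: measurable_vec. Qed.

HB.instance Definition _ := isMeasurableFun.Build _ _ _ _ vecZ measurable_vecZ.

Definition lawZ := distribution P vecZ.

Variable I1 : {set E}.

Definition merge (zz : vecspace R E * vecspace R E) : vecspace R E :=
  fun i => if i \in I1 then zz.1 i else zz.2 i.

Lemma measurable_merge : measurable_fun setT merge.
Proof.
apply: measurable_vec => i; rewrite /merge; case: (i \in I1).
  exact: measurableT_comp (measurable_coord i) measurable_fst.
exact: measurableT_comp (measurable_coord i) measurable_snd.
Qed.

HB.instance Definition _ := isMeasurableFun.Build _ _ _ _ merge measurable_merge.

Lemma merge_cylinder B : merge @^-1` cylinder B =
  cylinder (fun i => if i \in I1 then B i else setT) `*`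
  cylinder (fun i => if i \in I1 then setT else B i).
Proof.
apply/seteqP; split => -[z z'] /=.
  by move=> h; split => i _ /=; have := h i I; rewrite /merge /=; case: ifP.
by move=> [h1 h2] i _; have := h1 i I; have := h2 i I; rewrite /merge /=; case: ifP.
Qed.

Local Open Scope ereal_scope.

Lemma lawZ_cylinder B : (forall i, measurable (B i)) ->
  lawZ (cylinder B) = \prod_i P (Z i @^-1` B i).
Proof. exact: indepZ. Qed.

Lemma lawZ_merge A : measurable A -> lawZ A = (lawZ \x lawZ) (merge @^-1` A).
Proof.
apply: (measure_unique (@cylinders R E) (fun _ => setT) _ _ _ _
  (lawZ : {measure set _ -> \bar R}) (pushforward (lawZ \x lawZ) merge)).
- exact: cylinders_generate.
- exact: cylinders_setI.
- by move=> _; exists (fun _ => setT) => //; apply/seteqP; split => z //= _ i _.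
- by rewrite bigcup_const //; exists 0%N.
- move=> _ [B mB ->] /=; rewrite /pushforward merge_cylinder.
  have mB1 i : measurable (if i \in I1 then B i else setT) by case: ifP.
  have mB2 i : measurable (if i \in I1 then setT else B i) by case: ifP.
  rewrite product_measure1E; [|exact: measurable_cylinder|exact: measurable_cylinder].
  apply: eq_trans (lawZ_cylinder mB) _; symmetry.
  apply: eq_trans (congr2 *%E (lawZ_cylinder mB1) (lawZ_cylinder mB2)) _.
  rewrite -big_split /=; apply: eq_bigr => i _.
  by case: (i \in I1); rewrite /= preimage_setT probability_setT ?mul1e ?mule1.
- by move=> k; apply: le_lt_trans (probability_le1 lawZ measurableT) _; rewrite ltry.
Qed.

Variables (Th : Type) (Theta : set Th) (J K : Type).
Variables (G : Th -> vecspace R E -> vecspace R J)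
  (F : vecspace R J -> vecspace R E -> vecspace R K).
Hypothesis mG : forall s, measurable_fun setT (G s).
Hypothesis mF : measurable_fun setT (fun yz : vecspace R J * vecspace R E => F yz.1 yz.2).
Hypothesis G_local : forall s, Theta s -> forall z z', {in I1, z =1 z'} -> G s z = G s z'.
Hypothesis F_local : forall y z z', {in ~: I1, z =1 z'} -> F y z = F y z'.

Lemma measurable_F y : measurable_fun setT (F y).
Proof. exact: measurableT_comp mF (pair1_measurable y). Qed.

HB.instance Definition _ y := isMeasurableFun.Build _ _ _ _ (F y) (measurable_F y).

Definition condlaw (y : vecspace R J) : {measure set vecspace R K -> \bar R} :=
  distribution lawZ (F y).

Lemma measurable_condlaw U : measurable U -> measurable_fun setT (condlaw ^~ U).
Proof.
move=> mU; have := measurable_fun_xsection lawZ (mF measurableT mU).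
congr measurable_fun; apply/funext => y /=; congr (lawZ _).
by apply/seteqP; split => z; rewrite /xsection /= in_setE /=; [case|split].
Qed.

HB.instance Definition _ := isKernel.Build _ _ _ _ _ condlaw measurable_condlaw.

Lemma condlaw_setT y : condlaw y setT = 1.
Proof. exact: probability_setT. Qed.

HB.instance Definition _ := Kernel_isProbability.Build _ _ _ _ _ condlaw condlaw_setT.

Lemma G_merge s zz : Theta s -> G s (merge zz) = G s zz.1.
Proof. by move=> Ths; apply: G_local => // i iI1; rewrite /merge iI1. Qed.

Lemma F_merge y zz : F y (merge zz) = F y zz.2.
Proof. by apply: F_local => i; rewrite inE /merge => /negbTE ->. Qed.

(* By [lawZ_merge], [(Y s, X s)] has the law of [(G s z, F (G s z) z')] for
   independent copies [z], [z'] of [vecZ]. *)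
Lemma sufficient_split (X : Th -> Omega -> K -> R) (Y : Th -> Omega -> J -> R) :
  (forall s, Theta s -> forall w, Y s w = G s (vecZ w)) ->
  (forall s, Theta s -> forall w, X s w = F (Y s w) (vecZ w)) ->
  sufficient P Theta X Y.
Proof.
move=> defY defX; exists condlaw => s Ths A B mA mB.
have eqY : Y s = G s \o vecZ by apply/funext => w; exact: defY.
have eqX : X s = (fun z => F (G s z) z) \o vecZ.
  by apply/funext => w; rewrite /= defX // defY.
have mGB : measurable (G s @^-1` B) by rewrite -[_ @^-1` _]setTI; exact: mG.
set C := (fun z => F (G s z) z) @^-1` A `&` G s @^-1` B.
have mC : measurable C.
  apply: measurableI mGB; rewrite -[_ @^-1` _]setTI.
  exact: measurableT_comp mF (measurable_fun_pair (mG s) (@measurable_id _ _ _)) measurableT A mA.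
rewrite eqY.
rewrite -(ge0_integral_pushforward measurable_vecZ P (f := condlaw^~ A \o G s) mGB); last 2 first.
- apply: measurable_funTS; exact: measurableT_comp (measurable_condlaw mA) (mG s).
- by move=> z _; exact: measure_ge0.
rewrite eqX -[P _]/(lawZ C) (lawZ_merge mC) [RHS]integral_mkcond /product_measure1.
apply: eq_integral => z _ /=; rewrite /patch.
case: ifPn => [|zB]; first rewrite in_setE => zB.
  congr (lawZ _); apply/seteqP; split => z'; rewrite /xsection /= in_setE /C /=.
    by rewrite G_merge // F_merge; case.
  by rewrite G_merge // F_merge.
have -> : xsection (merge @^-1` C) z = set0.
  apply/seteqP; split => z' //; rewrite /xsection /= in_setE /C /= G_merge // => -[_ GB].
  by move/negP: zB; apply; rewrite in_setE.
exact: measure0.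
Qed.

End IndependentSplit.

Section SourceInHull.
Variables (R : realType) (V : finType) (adj : rel V) (O : {set V}) (Rs : {set {set V}}).

Notation J := {o : V | o \in bdryR adj O Rs}.
Notation Obs := {o : V | o \in O}.

Definition hull_edges : {set edge adj} := [set e : edge adj | val e \subset hullR adj O Rs]%SET.

Definition bdry_times (s : V) (z : vecspace R (edge adj)) : vecspace R J :=
  fun j => \sum_(e in pedges adj s (val j)) z e.

(* The default [0] is only taken when the pivot is not a boundary observer,
   which never happens once [Rs] is nonempty. *)
Definition obs_times (y : vecspace R J) (z : vecspace R (edge adj)) : vecspace R Obs :=
  fun i => (if insub (pivot adj O Rs (val i)) is Some j then y j else 0) +
           \sum_(e in pedges adj (pivot adj O Rs (val i)) (val i)) z e.

Lemma measurable_bdry_times s : measurable_fun setT (bdry_times s).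
Proof. by apply: measurable_vec => j; apply: measurable_sum_set => e; exact: measurable_coord. Qed.

Lemma measurable_obs_times :
  measurable_fun setT (fun yz : vecspace R J * vecspace R (edge adj) => obs_times yz.1 yz.2).
Proof.
apply: measurable_vec => i /=; apply: measurable_funD.
  case: insub => [j|]; last exact: measurable_cst.
  exact: measurableT_comp (measurable_coord j) measurable_fst.
by apply: measurable_sum_set => e; exact: measurableT_comp (measurable_coord e) measurable_snd.
Qed.

Hypothesis tree : is_tree adj.
Hypothesis classRs : forall r, r \in Rs -> is_class adj O r.
Hypothesis star : star_arrangement adj O Rs.

Lemma obs_times_local y z z' : {in ~: hull_edges, z =1 z'} -> obs_times y z = obs_times y z'.
Proof.
move=> zz'; apply/funext => i; congr (_ + _); apply: eq_bigr => e he; apply: zz'.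
by rewrite !inE (pedges_exit (pivot_avoids O Rs tree (val i)) he).
Qed.

Lemma pedges_hull_edges s o : s \in hullR adj O Rs -> o \in hullR adj O Rs ->
  pedges adj s o \subset hull_edges.
Proof.
move=> sH oH; apply/fintype.subsetP => e he; rewrite inE.
exact: pedges_convex (hullR_convex tree classRs star) sH oH he.
Qed.

Lemma bdry_times_local s z z' : s \in hullR adj O Rs -> {in hull_edges, z =1 z'} ->
  bdry_times s z = bdry_times s z'.
Proof.
move=> sH zz'; apply/funext => j; apply: eq_bigr => e he; apply: zz'.
apply: fintype.subsetP he; apply: pedges_hull_edges sH _.
exact: (fintype.subsetP (bdryR_subset_hullR adj O Rs)) (valP j).
Qed.

Lemma obs_times_bdry_times s z : s \in hullR adj O Rs ->
  (fun i : Obs => \sum_(e in pedges adj s (val i)) z e) = obs_times (bdry_times s z) z.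
Proof.
move=> sH; apply/funext => i; have pB := pivot_bdryR tree classRs sH (valP i).
rewrite /obs_times insubT /bdry_times /= (pedges_via_pivot tree classRs star sH (valP i)).
set p := pivot adj O Rs (val i).
rewrite (eq_bigl [predU pedges adj s p & pedges adj p (val i)]) => [|e]; last first.
  by rewrite finset.in_setU.
rewrite bigU //; apply: disjointWl (pedges_hull_edges sH _) _.
  exact: (fintype.subsetP (bdryR_subset_hullR adj O Rs)).
apply/pred0P => e /=; apply/negbTE/negP => /andP[eH he].
by move: eH; rewrite inE (negbTE (pedges_exit (pivot_avoids O Rs tree (val i)) he)).
Qed.

End SourceInHull.

Theorem theorem2
  (R : realType) (d : measure_display) (Omega : measurableType d)
  (P : probability Omega R)
  (V : finType) (adj : rel V) (O : {set V})
  (tau : edge adj -> Omega -> R)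
  (Rs : {set {set V}}) :
  is_tree adj ->
  O != finset.set0 -> O != finset.setT ->
  (forall e, measurable_fun setT (tau e)) ->
  (forall e w, (0 <= tau e w)%R) ->
  (forall e (x : R), P (tau e @^-1` [set x]) = 0%E) ->
  indep_delays P tau ->
  (forall r, r \in Rs -> is_class adj O r) ->
  star_arrangement adj O Rs ->
  sufficient P
    [set s : V | s \in unionR Rs]
    (fun s => obs_vec tau s O)
    (fun s => obs_vec tau s (bdryR adj O Rs)).
Proof.
move=> tree _ _ mtau _ _ indep classRs star.
have inH s : s \in unionR Rs -> s \in hullR adj O Rs.
  exact: (fintype.subsetP (unionR_subset_hullR adj O Rs)).
apply: (sufficient_split mtau indep (I1 := hull_edges adj O Rs)
  (G := @bdry_times R V adj O Rs) (F := @obs_times R V adj O Rs)).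
- exact: measurable_bdry_times.
- exact: measurable_obs_times.
- by move=> s /inH sH z z'; exact: bdry_times_local.
- exact: obs_times_local tree.
- by [].
- by move=> s /inH sH w; exact: (obs_times_bdry_times tree classRs star).
Qed.
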